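(* (a) $\mathsf{P}=\mathsf{U_{tot}P}=\mathsf{Few_{tot}P}$. (b) If $\mathsf{FewP}\subseteq\mathsf{Few_{tot}P}$, then $\mathsf{P}=\mathsf{FewP}$.
   Context: An NPTM is a non-deterministic polynomial-time Turing machine. For an NPTM $M$ and input $x$, $acc_M(x)$ is the number of accepting paths of $M$ on $x$ and $tot_M(x)$ is the number of all computation paths of $M$ on $x$ minus $1$. $\#\mathsf{P}=\{acc_M\}$, $\mathsf{TotP}=\{tot_M\}$ over all NPTMs $M$. $\mathsf{U_{tot}P}$ is the class of languages $L$ for which there is $f\in\mathsf{TotP}$ with $f(x)=1$ if $x\in L$ and $f(x)=0$ if $x\notin L$. $\mathsf{FewP}$ is the class of languages $L$ for which there are $f\in\#\mathsf{P}$ and a polynomial $p$ such that $0<f(x)\le p(|x|)$ if $x\in L$ and $f(x)=0$ if $x\notin L$; $\mathsf{Few_{tot}P}$ is defined identically with $f\in\mathsf{TotP}$. *)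

From mathcomp Require Import all_boot.
Set Implicit Arguments. Unset Strict Implicit. Unset Printing Implicit Defensive.

Inductive move := MoveL | MoveR | Stay.

(* On input x (a binary word) the tape
   initially holds the symbols [inp b] of x, head on the first one, and
   blanks elsewhere.  From state q reading symbol a, the machine may
   perform any transition in [delta q a]; it halts when this list is empty,
   and the halting path is accepting iff the final state is in [accq]. *)
Record NTM := {
  Q : finType;
  Gam : finType;
  blank : Gam;
  inp : bool -> Gam;
  inp_inj : injective inp;
  inp_nblank : forall b, inp b != blank;
  q0 : Q;
  accq : pred Q;
  delta : Q -> Gam -> seq (Q * Gam * move)
}.

(* configuration: state, tape left of head (nearest first), scanned
   symbol, tape right of head (nearest first) *)
Definition config (M : NTM) : Type := (Q M * seq (Gam M) * Gam M * seq (Gam M))%type.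

Definition init_config (M : NTM) (x : seq bool) : config M :=
  match x with
  | [::] => (q0 M, [::], blank M, [::])
  | b :: x' => (q0 M, [::], inp M b, map (inp M) x')
  end.

Definition apply_trans (M : NTM) (c : config M) (t : Q M * Gam M * move)
  : config M :=
  let: (_, l, _, r) := c in
  let: (q', a', m) := t in
  match m with
  | Stay => (q', l, a', r)
  | MoveL => match l with
             | [::] => (q', [::], blank M, a' :: r)
             | b :: l' => (q', l', b, a' :: r)
             end
  | MoveR => match r with
             | [::] => (q', a' :: l, blank M, [::])
             | b :: r' => (q', a' :: l, b, r')
             end
  end.

Definition succs (M : NTM) (c : config M) : seq (config M) :=
  let: (q, _, a, _) := c in map (apply_trans c) (@delta M q a).

Definition terminal (M : NTM) (c : config M) : bool := nilp (succs c).

Fixpoint halts_within (M : NTM) (n : nat) (c : config M) : bool :=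
  if terminal c then true else
  match n with
  | 0 => false
  | n'.+1 => all (halts_within n') (succs c)
  end.

Fixpoint npaths (M : NTM) (n : nat) (c : config M) : nat :=
  if terminal c then 1 else
  match n with
  | 0 => 0
  | n'.+1 => sumn (map (npaths n') (succs c))
  end.

Fixpoint naccpaths (M : NTM) (n : nat) (c : config M) : nat :=
  if terminal c then (@accq M c.1.1.1 : nat) else
  match n with
  | 0 => 0
  | n'.+1 => sumn (map (naccpaths n') (succs c))
  end.

(* polynomial bound of the shape c * n^c + c (dominates every polynomial) *)
Definition pbound (k n : nat) : nat := k * n ^ k + k.

Definition poly_time_with (M : NTM) (k : nat) : Prop :=
  forall x : seq bool, halts_within (pbound k (size x)) (init_config M x).

Definition poly_time (M : NTM) : Prop := exists k, poly_time_with M k.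

Definition deterministic (M : NTM) : Prop :=
  forall q a, size (@delta M q a) <= 1.

Definition acc (M : NTM) (k : nat) (x : seq bool) : nat :=
  naccpaths (pbound k (size x)) (init_config M x).
Definition tot (M : NTM) (k : nat) (x : seq bool) : nat :=
  (npaths (pbound k (size x)) (init_config M x)).-1.

Definition language := seq bool -> Prop.
Definition lclass := language -> Prop.
Definition fclass := (seq bool -> nat) -> Prop.

Definition sharpP : fclass := fun f =>
  exists (M : NTM) (k : nat), poly_time_with M k /\ forall x, f x = acc M k x.

Definition TotP : fclass := fun f =>
  exists (M : NTM) (k : nat), poly_time_with M k /\ forall x, f x = tot M k x.

Definition classP : lclass := fun L =>
  exists (M : NTM) (k : nat), deterministic M /\ poly_time_with M k /\
    forall x, L x <-> acc M k x = 1.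

Definition UtotP : lclass := fun L =>
  exists f, TotP f /\ forall x, (L x -> f x = 1) /\ (~ L x -> f x = 0).

Definition FewP : lclass := fun L =>
  exists f, sharpP f /\ exists c, forall x,
    (L x -> 0 < f x <= pbound c (size x)) /\ (~ L x -> f x = 0).

Definition FewtotP : lclass := fun L =>
  exists f, TotP f /\ exists c, forall x,
    (L x -> 0 < f x <= pbound c (size x)) /\ (~ L x -> f x = 0).

Definition class_eq (C D : lclass) : Prop := forall L, C L <-> D L.
Definition class_sub (C D : lclass) : Prop := forall L, C L -> D L.

(* A deterministic machine has at most one accepting path, and letting each
   accepting leaf branch into two halting leaves turns its acceptance count
   into a TotP function; hence P ⊆ U_totP ⊆ Few_totP.  Conversely, tot_M(x) > 0
   iff the computation tree of M on x branches at all, which a deterministic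
   machine detects by simulating M and accepting at the first
   nondeterministic choice; hence Few_totP ⊆ P.  Part (b) then follows from
   P ⊆ FewP. *)
From mathcomp Require Import all_boot.
From Stdlib Require Import Classical.
Set Implicit Arguments. Unset Strict Implicit. Unset Printing Implicit Defensive.

Section ComputationTree.
Variable M : NTM.
Implicit Types (c : config M) (n m : nat).

Lemma halts_within0 c : halts_within 0 c = terminal c.
Proof. by rewrite /=; case: terminal. Qed.

Lemma halts_withinS n c : halts_within n.+1 c =
  if terminal c then true else all (halts_within n) (succs c).
Proof. by []. Qed.

Lemma npathsS n c : npaths n.+1 c =
  if terminal c then 1 else sumn (map (npaths n) (succs c)).
Proof. by []. Qed.

Lemma naccpathsS n c : naccpaths n.+1 c =
  if terminal c then (accq c.1.1.1 : nat) else sumn (map (naccpaths n) (succs c)).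
Proof. by []. Qed.

Lemma halts_within_terminal n c : terminal c -> halts_within n c.
Proof. by case: n => /= [|n] ->. Qed.

Lemma npaths_terminal n c : terminal c -> npaths n c = 1.
Proof. by case: n => /= [|n] ->. Qed.

Lemma naccpaths_terminal n c : terminal c -> naccpaths n c = accq c.1.1.1.
Proof. by case: n => /= [|n] ->. Qed.

Lemma delta_terminal (q : Q M) l a r : terminal (q, l, a, r) -> delta q a = [::].
Proof. by rewrite /terminal /nilp /= size_map => /eqP/size0nil. Qed.

Lemma apply_trans_state c t : (apply_trans c t).1.1.1 = t.1.1.
Proof. by case: c => [[[q l] a] r]; case: t => [[q' a'] []]; case: l; case: r. Qed.

Lemma halts_within_mono n m c : n <= m -> halts_within n c -> halts_within m c.
Proof.
elim: n m c => [|n IH] [|m] c //= le_nm; case: (terminal c) => //.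
by apply: sub_all => c'; apply: IH.
Qed.

Lemma npaths_stable n m c : n <= m -> halts_within n c -> npaths m c = npaths n c.
Proof.
elim: n m c => [|n IH] [|m] c //= le_nm; case: (terminal c) => // /allP halts.
by congr sumn; apply/eq_in_map => c' c'_succ; apply/IH/halts.
Qed.

Lemma naccpaths_stable n m c :
  n <= m -> halts_within n c -> naccpaths m c = naccpaths n c.
Proof.
elim: n m c => [|n IH] [|m] c //= le_nm; case: (terminal c) => // /allP halts.
by congr sumn; apply/eq_in_map => c' c'_succ; apply/IH/halts.
Qed.

Lemma npaths_gt0 n c : halts_within n c -> 0 < npaths n c.
Proof.
elim: n c => [|n IH] c /=; rewrite /terminal; case: (succs c) => [|c' s] //=.
by case/andP=> /IH; rewrite addn_gt0 => ->.
Qed.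

Lemma npaths_branching n c :
  halts_within n.+1 c -> 1 < size (succs c) -> 1 < npaths n.+1 c.
Proof.
rewrite /= /terminal; case: (succs c) => [|c1 [|c2 s]] //= /and3P[h1 h2 _] _.
by rewrite addnA (leq_trans _ (leq_addr _ _)) // -(addn1 1) leq_add ?npaths_gt0.
Qed.

Lemma size_succs_deterministic c : deterministic M -> size (succs c) <= 1.
Proof. by case: c => [[[q l] a] r] det; rewrite /= size_map det. Qed.

Lemma naccpaths_deterministic n c : deterministic M -> naccpaths n c <= 1.
Proof.
move=> det; elim: n c => [|n IH] c /=; case: (terminal c); rewrite ?leq_b1 //.
move: (size_succs_deterministic c det).
by case: (succs c) => [|c' [|]] //= _; rewrite addn0.
Qed.

Lemma succs_single c :
  size (succs c) <= 1 -> ~~ terminal c -> exists c', succs c = [:: c'].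
Proof. by rewrite /terminal; case: (succs c) => [|c' [|]] //= _ _; exists c'. Qed.

Lemma acc_deterministic k x : deterministic M -> acc M k x <= 1.
Proof. exact: naccpaths_deterministic. Qed.

End ComputationTree.

Lemma pbound_ltS k n : pbound k n < pbound k.+1 n.
Proof.
rewrite /pbound addnS ltnS leq_add2r.
case: n => [|n]; first by case: k => [|k]; rewrite ?mul0n // !exp0n ?muln0.
by rewrite expnS mulnA leq_mul // (leq_trans (leqnSn k)) // leq_pmulr.
Qed.

Section OptionMachine.
Variable M : NTM.
Variable accept : pred (option (Q M)).
Variable step : Q M -> Gam M -> seq (option (Q M) * Gam M * move).

Definition option_machine : NTM :=
  {| Q := option (Q M); Gam := Gam M; blank := blank M; inp := @inp M;
     inp_inj := @inp_inj M; inp_nblank := @inp_nblank M; q0 := Some (q0 M);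
     accq := accept;
     delta := fun q a => if q is Some q then step q a else [::] |}.

Definition some_config (c : config M) : config option_machine :=
  let: (q, l, a, r) := c in (Some q, l, a, r).

Definition some_trans (t : Q M * Gam M * move) : option (Q M) * Gam M * move :=
  (Some t.1.1, t.1.2, t.2).

Lemma init_config_option_machine x :
  init_config option_machine x = some_config (init_config M x).
Proof. by case: x. Qed.

Lemma apply_trans_some c t :
  apply_trans (some_config c) (some_trans t) = some_config (apply_trans c t).
Proof.
by case: c => [[[q l] a] r]; case: t => [[q' a'] []] /=; [case: l | case: r |].
Qed.

Lemma succs_some_config q l a r : step q a = map some_trans (delta q a) ->
  succs (some_config (q, l, a, r)) = map some_config (succs (q, l, a, r)).
Proof.
move=> /= ->; rewrite -!map_comp; apply: eq_map => t.
exact: (apply_trans_some (q, l, a, r)).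
Qed.

Lemma terminal_some_config q l a r : step q a = map some_trans (delta q a) ->
  terminal (some_config (q, l, a, r)) = terminal (q, l, a, r).
Proof. by move=> sim; rewrite /terminal succs_some_config // /nilp size_map. Qed.

Lemma terminal_None (c : config option_machine) : c.1.1.1 = None -> terminal c.
Proof. by case: c => [[[q l] a] r] /= ->. Qed.

Hypothesis step_simulates_or_stops : forall q a,
  step q a = map some_trans (delta q a) \/ all (fun t => t.1.1 == None) (step q a).

Lemma halts_within_stops n q l a r : all (fun t => t.1.1 == None) (step q a) ->
  halts_within n.+1 (some_config (q, l, a, r)).
Proof.
move=> stops; rewrite halts_withinS /= all_map; case: (terminal _) => //.
apply: sub_all stops => t /eqP t_stops.
by apply: halts_within_terminal; apply: terminal_None; rewrite apply_trans_state.
Qed.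

Lemma halts_within_some_config n c :
  halts_within n c -> halts_within n.+1 (some_config c).
Proof.
elim: n c => [|n IH] [[[q l] a] r] halts;
  case: (step_simulates_or_stops q a) => [sim | /halts_within_stops //].
  by apply: halts_within_terminal; rewrite terminal_some_config // -halts_within0.
rewrite halts_withinS terminal_some_config //; case: ifP => // nterm.
move: halts; rewrite halts_withinS nterm => /allP halts.
by rewrite succs_some_config // all_map; apply/allP => c' /halts /IH.
Qed.

Lemma poly_time_option_machine k :
  poly_time_with M k -> poly_time_with option_machine k.+1.
Proof.
move=> poly_time x; rewrite init_config_option_machine.
exact: halts_within_mono (pbound_ltS k _) (halts_within_some_config (poly_time x)).
Qed.

End OptionMachine.

Arguments some_config {M accept step}.
Arguments some_trans {M}.

Section SplitAccepting.
Variable M : NTM.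

Definition split_accepting_step q a : seq (option (Q M) * Gam M * move) :=
  if nilp (delta q a) && accq q then [:: (None, a, Stay); (None, a, Stay)]
  else map some_trans (delta q a).

Definition split_accepting : NTM := option_machine xpred0 split_accepting_step.

Lemma split_accepting_step_spec q a :
  split_accepting_step q a = map some_trans (delta q a) \/
  all (fun t => t.1.1 == None) (split_accepting_step q a).
Proof. by rewrite /split_accepting_step; case: ifP; [right | left]. Qed.

Lemma npaths_split_accepting_terminal n (c : config M) : terminal c ->
  npaths n.+1 (some_config c : config split_accepting) = (accq c.1.1.1).+1.
Proof.
case: c => [[[q l] a] r] /delta_terminal no_move.
rewrite /= /terminal /= /split_accepting_step no_move /=.
case: (accq q) => //=.
by rewrite !npaths_terminal //; apply: terminal_None.
Qed.

Hypothesis det : deterministic M.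

Lemma npaths_split_accepting n c : halts_within n c ->
  npaths n.+1 (some_config c : config split_accepting) = (naccpaths n c).+1.
Proof.
elim: n c => [|n IH] c halts.
  rewrite halts_within0 in halts.
  by rewrite npaths_split_accepting_terminal // naccpaths_terminal.
have [term | nterm] := boolP (terminal c).
  by rewrite npaths_split_accepting_terminal // naccpaths_terminal.
have [c' succs_c] := succs_single (size_succs_deterministic c det) nterm.
move: c nterm succs_c halts => [[[q l] a] r] nterm succs_c.
have sim : split_accepting_step q a = map some_trans (delta q a).
  move: nterm; rewrite /split_accepting_step /terminal /nilp /= size_map.
  by move=> /negbTE ->.
rewrite halts_withinS npathsS naccpathsS terminal_some_config // (negbTE nterm).
by rewrite succs_some_config // succs_c /= !addn0 andbT => /IH.
Qed.

End SplitAccepting.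

Section DetectBranching.
Variable M : NTM.

Definition detect_branching_step q a : seq (option (Q M) * Gam M * move) :=
  if 1 < size (delta q a) then [:: (None, a, Stay)] else map some_trans (delta q a).

Definition detect_branching : NTM :=
  option_machine (xpred1 None) detect_branching_step.

Lemma detect_branching_step_spec q a :
  detect_branching_step q a = map some_trans (delta q a) \/
  all (fun t => t.1.1 == None) (detect_branching_step q a).
Proof. by rewrite /detect_branching_step; case: ifP; [right | left]. Qed.

Lemma detect_branching_deterministic : deterministic detect_branching.
Proof.
move=> [q|] a //=; rewrite /detect_branching_step.
by case: ltnP => //; rewrite size_map.
Qed.

Lemma naccpaths_detect_branching_branching n (c : config M) :
  1 < size (succs c) ->
  naccpaths n.+1 (some_config c : config detect_branching) = 1.
Proof.
case: c => [[[q l] a] r] /=; rewrite size_map => branching.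
by rewrite /= /terminal /= /detect_branching_step branching /= naccpaths_terminal.
Qed.

Lemma naccpaths_detect_branching_terminal n (c : config M) : terminal c ->
  naccpaths n (some_config c : config detect_branching) = 0.
Proof.
case: c => [[[q l] a] r] /delta_terminal no_move.
by rewrite naccpaths_terminal // /terminal /= /detect_branching_step no_move.
Qed.

Lemma naccpaths_detect_branching n c : halts_within n c ->
  naccpaths n.+1 (some_config c : config detect_branching) = (1 < npaths n c).
Proof.
elim: n c => [|n IH] c halts.
  rewrite halts_within0 in halts.
  by rewrite naccpaths_detect_branching_terminal // npaths_terminal.
case: (ltnP 1 (size (succs c))) => [branching | single].
  by rewrite naccpaths_detect_branching_branching // npaths_branching.
have [term | nterm] := boolP (terminal c).
  by rewrite naccpaths_detect_branching_terminal // npaths_terminal.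
have [c' succs_c] := succs_single single nterm.
move: c nterm succs_c halts single => [[[q l] a] r] nterm succs_c halts single.
have sim : detect_branching_step q a = map some_trans (delta q a).
  by rewrite /detect_branching_step ltnNge; move: single; rewrite /= size_map => ->.
move: halts; rewrite halts_withinS naccpathsS npathsS terminal_some_config //.
by rewrite (negbTE nterm) succs_some_config // succs_c /= !addn0 andbT => /IH.
Qed.

End DetectBranching.

Lemma TotP_acc_deterministic M k :
  deterministic M -> poly_time_with M k -> TotP (acc M k).
Proof.
move=> det poly_time; exists (split_accepting M), k.+1; split.
  by apply: poly_time_option_machine poly_time; apply: split_accepting_step_spec.
move=> x; rewrite /tot /acc init_config_option_machine.
have halts :=
  halts_within_some_config xpred0 (@split_accepting_step_spec M) (poly_time x).
by rewrite (npaths_stable (pbound_ltS k _) halts) npaths_split_accepting.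
Qed.

Lemma TotP_support_deterministic f : TotP f ->
  exists M k, [/\ deterministic M, poly_time_with M k &
                 forall x, acc M k x = (0 < f x)].
Proof.
move=> [M [k [poly_time f_tot]]]; exists (detect_branching M), k.+1; split.
- exact: detect_branching_deterministic.
- by apply: poly_time_option_machine poly_time; apply: detect_branching_step_spec.
move=> x; rewrite f_tot /tot /acc init_config_option_machine ltn_predRL.
have halts :=
  halts_within_some_config (xpred1 None) (@detect_branching_step_spec M) (poly_time x).
by rewrite (naccpaths_stable (pbound_ltS k _) halts) naccpaths_detect_branching.
Qed.

Lemma acc_indicator_deterministic (L : language) M k :
  deterministic M -> (forall x, L x <-> acc M k x = 1) ->
  forall x, (L x -> acc M k x = 1) /\ (~ L x -> acc M k x = 0).
Proof.
move=> det decides x; split=> [/decides // | notL].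
move: (acc_deterministic k x det) (decides x); case: (acc M k x) => [|[|]] //.
by move=> _ [_ /(_ erefl)].
Qed.

Lemma support_iff (L : language) (f : seq bool -> nat) :
  (forall x, (L x -> 0 < f x) /\ (~ L x -> f x = 0)) -> forall x, L x <-> 0 < f x.
Proof.
move=> supp x; have [pos zero] := supp x; split=> // f_pos.
by apply: NNPP => /zero f0; rewrite f0 in f_pos.
Qed.

Lemma classP_sub_UtotP : class_sub classP UtotP.
Proof.
move=> L [M [k [det [poly_time decides]]]].
exists (acc M k); split; first exact: TotP_acc_deterministic.
exact: acc_indicator_deterministic.
Qed.

Lemma UtotP_sub_FewtotP : class_sub UtotP FewtotP.
Proof.
move=> L [f [Tf indicator]]; exists f; split => //; exists 1 => x.
by have [one zero] := indicator x; split=> // /one ->; rewrite /pbound addn1.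
Qed.

Lemma FewtotP_sub_classP : class_sub FewtotP classP.
Proof.
move=> L [f [Tf [c few]]].
have [M [k [det poly_time acc_supp]]] := TotP_support_deterministic Tf.
have supp x : (L x -> 0 < f x) /\ (~ L x -> f x = 0).
  by have [pos zero] := few x; split=> // /pos /andP[].
exists M, k; split=> //; split=> // x; rewrite acc_supp (support_iff supp).
by case: (0 < f x).
Qed.

Lemma classP_sub_FewP : class_sub classP FewP.
Proof.
move=> L [M [k [det [poly_time decides]]]].
exists (acc M k); split; first by exists M, k.
exists 1 => x; have [one zero] := acc_indicator_deterministic det decides x.
by split=> // /one ->; rewrite /pbound addn1.
Qed.

Theorem proposition6 :
  (class_eq classP UtotP /\ class_eq UtotP FewtotP) /\
  (class_sub FewP FewtotP -> class_eq classP FewP).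
Proof.
split; first split.
- move=> L; split; first exact: classP_sub_UtotP.
  by move/UtotP_sub_FewtotP/FewtotP_sub_classP.
- move=> L; split; first exact: UtotP_sub_FewtotP.
  by move/FewtotP_sub_classP/classP_sub_UtotP.
- move=> FewP_sub_FewtotP L; split; first exact: classP_sub_FewP.
  by move/FewP_sub_FewtotP/FewtotP_sub_classP.
Qed.
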